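(* Let $F, F'$ be minimally unsatisfiable clause-sets with $F \to^{*}_{\mathrm{sDP}} F'$. Then $\mathrm{minvdeg}(F') \ge \mathrm{minvdeg}(F)$.
   Context: Literals come with a fixed-point-free involution $x \mapsto \overline{x}$; variables are positive literals. A clause is a finite set $C$ of literals with $C \cap \overline{C} = \emptyset$; a clause-set is a finite set of clauses. A clause-set is minimally unsatisfiable if it is unsatisfiable but becomes satisfiable upon removing any clause. $\mathrm{ld}_F(x)$ is the number of clauses of $F$ containing literal $x$; $\mathrm{vdeg}_F(v) = \mathrm{ld}_F(v) + \mathrm{ld}_F(\overline{v})$; $\mathrm{minvdeg}(F) = \min_{v \in \mathrm{var}(F)} \mathrm{vdeg}_F(v)$ if $F$ has variables, and $+\infty$ otherwise. A variable $v$ is singular in $F$ if $\min(\mathrm{ld}_F(v), \mathrm{ld}_F(\overline{v})) = 1$. DP-reduction on $v$: $\mathrm{DP}_v(F) = \{C \in F : v \notin \mathrm{var}(C)\} \cup \{(C \cup D) \setminus \{v, \overline{v}\} : C, D \in F,\ C \cap \overline{D} = \{v\}\}$. $F \to_{\mathrm{sDP}} F'$ holds if $F' = \mathrm{DP}_v(F)$ for some singular variable $v$ of $F$; $\to^{*}_{\mathrm{sDP}}$ is its reflexive-transitive closure. *)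

From mathcomp Require Import all_boot finmap.
From Stdlib Require Import Relations.
Set Implicit Arguments. Unset Strict Implicit. Unset Printing Implicit Defensive.
Local Open Scope fset_scope.

(* Variables are natural numbers; a literal is a pair (v, b): b = true is the
   positive literal v, b = false its complement.  The fixed-point-free
   involution is [compl]. *)
Definition var_t := nat.
Definition lit := (nat * bool)%type.
Definition compl (x : lit) : lit := (x.1, ~~ x.2).
Definition pos (v : var_t) : lit := (v, true).
Definition neg (v : var_t) : lit := (v, false).

Definition clause := {fset lit}.
Definition clauseset := {fset clause}.

Definition compl_cl (C : clause) : clause := [fset compl x | x in C].

Definition is_clause (C : clause) : bool := C `&` compl_cl C == fset0.
Definition is_clauseset (F : clauseset) : bool := [forall C : F, is_clause (val C)].

Definition var_cl (C : clause) : {fset nat} := [fset x.1 | x in C].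
Definition var (F : clauseset) : {fset nat} :=
  \bigcup_(C <- F) var_cl C.

Definition lit_sat (f : nat -> bool) (x : lit) : bool := f x.1 == x.2.
Definition cl_sat (f : nat -> bool) (C : clause) : bool := [exists x : C, lit_sat f (val x)].
Definition cs_sat (f : nat -> bool) (F : clauseset) : bool := [forall C : F, cl_sat f (val C)].
Definition satisfiable (F : clauseset) : Prop := exists f, cs_sat f F.

Definition min_unsat (F : clauseset) : Prop :=
  is_clauseset F /\ ~ satisfiable F /\
  forall C, C \in F -> satisfiable (F `\ C).

Definition ld (F : clauseset) (x : lit) : nat := #|` [fset C in F | x \in C]|.
Definition vdeg (F : clauseset) (v : var_t) : nat := ld F (pos v) + ld F (neg v).

(* extended naturals: None = +infinity *)
Definition omin (a b : option nat) : option nat :=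
  match a, b with
  | None, _ => b
  | _, None => a
  | Some x, Some y => Some (minn x y)
  end.
Definition ole (a b : option nat) : bool :=
  match a, b with
  | _, None => true
  | None, Some _ => false
  | Some x, Some y => x <= y
  end.

Definition minvdeg (F : clauseset) : option nat :=
  foldr (fun v acc => omin (Some (vdeg F v)) acc) None (enum_fset (var F)).

Definition singular (F : clauseset) (v : var_t) : bool :=
  (v \in var F) && (minn (ld F (pos v)) (ld F (neg v)) == 1).

Definition DP (v : var_t) (F : clauseset) : clauseset :=
  [fset C in F | v \notin var_cl C] `|`
  [fset (CD.1 `|` CD.2) `\` [fset pos v; neg v] | CD in F `*` F
     & CD.1 `&` compl_cl CD.2 == [fset pos v]].

Definition sDP_step (F F' : clauseset) : Prop :=
  exists v, singular F v /\ F' = DP v F.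

Definition sDP_star : clauseset -> clauseset -> Prop := clos_refl_trans clauseset sDP_step.

From mathcomp Require Import all_boot finmap.
From Stdlib Require Import Relations.
Set Implicit Arguments. Unset Strict Implicit. Unset Printing Implicit Defensive.
Local Open Scope fset_scope.

(* Let v be singular in the minimally unsatisfiable F, with p the literal of v
   occurring in a single clause C0, and q its complement.  Every assignment f
   satisfying F - {D}, for a clause D containing q, falsifies D and also every
   literal of C0 off v (otherwise flipping v to make q true would satisfy F),
   so f falsifies the resolvent R(D) = (C0 u D) - {v, -v}.  Hence the
   resolvents are clauses, pairwise distinct and distinct from the clauses of
   F avoiding v, so DP_v(F) consists of exactly these two kinds of clauses and
   is again minimally unsatisfiable.  For degrees: a variable w of DP_v(F) not
   occurring in C0 keeps at least its degree, occurrences being carried along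
   injectively; if w occurs in C0 through a literal x, then x lies in all the
   ld(q) resolvents and -x in some clause avoiding v (minimally unsatisfiable
   clause-sets have no pure literals), so vdeg(w) >= ld(q) + 1 = vdeg(v). *)

Lemma complK : involutive compl.
Proof. by case=> n b; rewrite /compl /= negbK. Qed.

Lemma lit_sat_compl f x : lit_sat f (compl x) = ~~ lit_sat f x.
Proof. by case: x => n b; rewrite /lit_sat /compl /=; case: (f n); case: b. Qed.

Lemma lit_same_var x y : y.1 = x.1 -> y = x \/ y = compl x.
Proof. by case: x y => n b [m c] /= ->; case: b; case: c; auto. Qed.

Lemma lit_cases x :
  (x = pos x.1 /\ compl x = neg x.1) \/ (x = neg x.1 /\ compl x = pos x.1).
Proof. by case: x => n []; [left|right]. Qed.

Lemma in_compl_cl x (C : clause) : (x \in compl_cl C) = (compl x \in C).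
Proof.
apply/imfsetP/idP => [[y /= Hy ->]|H]; first by rewrite complK.
by exists (compl x); rewrite ?complK.
Qed.

Lemma cl_satP f (C : clause) :
  reflect (exists2 x, x \in C & lit_sat f x) (cl_sat f C).
Proof.
apply: (iffP existsP) => [[[x Hx] /= S]|[x Hx S]]; first by exists x.
by exists [` Hx].
Qed.

Lemma cl_satPn f (C : clause) :
  reflect (forall x, x \in C -> ~~ lit_sat f x) (~~ cl_sat f C).
Proof.
apply: (iffP negP) => [N x Hx|N /cl_satP [x Hx S]].
  by apply/negP => S; apply: N; apply/cl_satP; exists x.
by move: (N x Hx); rewrite S.
Qed.

Lemma cs_satP f (F : clauseset) :
  reflect (forall C, C \in F -> cl_sat f C) (cs_sat f F).
Proof.
apply: (iffP forallP) => [H C HC|H [C HC]] /=; last exact: H.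
exact: (H [` HC]).
Qed.

Lemma var_clP n (C : clause) : reflect (exists2 x, x \in C & x.1 = n) (n \in var_cl C).
Proof.
apply: (iffP idP) => [/imfsetP [x /= Hx ->]|[x Hx <-]]; first by exists x.
by apply/imfsetP; exists x.
Qed.

Lemma varP n (F : clauseset) :
  reflect (exists2 C, C \in F & n \in var_cl C) (n \in var F).
Proof.
apply: (iffP idP) => [/bigfcupP [C /andP [HC _] H]|[C HC H]]; first by exists C.
by apply/bigfcupP; exists C; rewrite ?HC.
Qed.

Lemma is_clause_compl (C : clause) x : is_clause C -> x \in C -> compl x \notin C.
Proof.
move=> /eqP H Hx; apply/negP => Hc.
have : compl x \in C `&` compl_cl C by rewrite in_fsetI Hc in_compl_cl complK.
by rewrite H.
Qed.

Lemma is_clause_falsified f (C : clause) :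
  (forall x, x \in C -> ~~ lit_sat f x) -> is_clause C.
Proof.
move=> N; apply/eqP/fsetP => x; rewrite in_fsetI in_compl_cl in_fset0.
apply/negP => /andP [Hx Hc].
by have := N _ Hc; rewrite lit_sat_compl (negbTE (N _ Hx)).
Qed.

Definition set_var (g : nat -> bool) (n : var_t) (b : bool) : nat -> bool :=
  fun k => if k == n then b else g k.

Lemma lit_sat_set_var g x b : lit_sat (set_var g x.1 b) x = (b == x.2).
Proof. by rewrite /lit_sat /set_var eqxx. Qed.

Lemma lit_sat_set_var_other g n b x :
  x.1 != n -> lit_sat (set_var g n b) x = lit_sat g x.
Proof. by rewrite /lit_sat /set_var => /negbTE ->. Qed.

Lemma cl_sat_set_var g n b (C : clause) :
  n \notin var_cl C -> cl_sat (set_var g n b) C = cl_sat g C.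
Proof.
move=> nC; have off x : x \in C -> lit_sat (set_var g n b) x = lit_sat g x.
  move=> Hx; apply: lit_sat_set_var_other; apply: contraNneq nC => <-.
  by apply/var_clP; exists x.
apply/cl_satP/cl_satP => [[x Hx S]|[x Hx S]]; exists x => //.
  by rewrite -off.
by rewrite off.
Qed.

Definition resolve (v : var_t) (C1 C2 : clause) : clause :=
  (C1 `|` C2) `\` [fset pos v; neg v].

Lemma in_resolve v C1 C2 x :
  (x \in resolve v C1 C2) = (x.1 != v) && ((x \in C1) || (x \in C2)).
Proof.
rewrite /resolve in_fsetD in_fsetU !inE; congr (_ && _).
case: x => n b; rewrite /pos /neg !xpair_eqE /=.
by case: (eqVneq n v) => //= _; case: b.
Qed.

Lemma resolveC v : commutative (resolve v).
Proof. by move=> C1 C2; rewrite /resolve fsetUC. Qed.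

Lemma resolve_sound g x C1 C2 : compl x \notin C1 -> x \notin C2 ->
  cl_sat g C1 -> cl_sat g C2 -> cl_sat g (resolve x.1 C1 C2).
Proof.
move=> nC1 nC2 /cl_satP [y Hy Sy] /cl_satP [z Hz Sz].
have [/lit_same_var [] Ey|yv] := eqVneq y.1 x.1; last 1 first.
- by apply/cl_satP; exists y; rewrite // in_resolve yv Hy.
- subst y; have [/lit_same_var [] Ez|zv] := eqVneq z.1 x.1.
  + by subst z; rewrite Hz in nC2.
  + by move: Sz; rewrite Ez lit_sat_compl Sy.
  + by apply/cl_satP; exists z; rewrite // in_resolve zv Hz orbT.
- by subst y; rewrite Hy in nC1.
Qed.

Lemma DP_mem_cases v (F : clauseset) (E : clause) : E \in DP v F ->
  (E \in F /\ v \notin var_cl E) \/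
  exists C1 C2, [/\ C1 \in F, C2 \in F, pos v \in C1, neg v \in C2
                  & E = resolve v C1 C2].
Proof.
rewrite /DP in_fsetU => /orP [|/imfsetP [[C1 C2] /=]].
  by rewrite !inE => /andP [HE Hv]; left.
rewrite !inE /= => /andP [/andP [H1 H2] /eqP HI] ->; right; exists C1, C2.
have : pos v \in C1 `&` compl_cl C2 by rewrite HI inE.
by rewrite in_fsetI in_compl_cl => /andP [].
Qed.

Lemma DP_kept v (F : clauseset) (E : clause) :
  E \in F -> v \notin var_cl E -> E \in DP v F.
Proof. by move=> HE Hv; rewrite /DP in_fsetU !inE HE Hv. Qed.

Lemma DP_resolve v (F : clauseset) (C1 C2 : clause) :
  C1 \in F -> C2 \in F -> pos v \in C1 -> neg v \in C2 ->
  is_clause C1 -> is_clause (resolve v C1 C2) -> resolve v C1 C2 \in DP v F.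
Proof.
move=> H1 H2 P1 N2 cl1 clR; rewrite /DP in_fsetU; apply/orP; right.
apply/imfsetP; exists (C1, C2) => //=; rewrite !inE /= H1 H2 /=.
apply/eqP/fsetP => z; rewrite in_fsetI in_compl_cl !inE.
apply/andP/eqP => [[Z1 Z2]|->]; last by split.
have [/(@lit_same_var (pos v)) [] // Ez|zv] := eqVneq z.1 v.
  by move: (is_clause_compl cl1 P1); rewrite -Ez Z1.
have Rz : z \in resolve v C1 C2 by rewrite in_resolve zv Z1.
by move: (is_clause_compl clR Rz); rewrite in_resolve zv Z2 orbT.
Qed.

Lemma ole_refl a : ole a a.
Proof. by case: a => //= n; rewrite leqnn. Qed.

Lemma ole_trans a b c : ole a b -> ole b c -> ole a c.
Proof. by case: a => [a|]; case: b => [b|]; case: c => [c|] //=; exact: leq_trans. Qed.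

Lemma foldr_omin_le (h : nat -> nat) (s : seq nat) u : u \in s ->
  ole (foldr (fun v acc => omin (Some (h v)) acc) None s) (Some (h u)).
Proof.
elim: s => //= a s IH; rewrite inE => /orP [/eqP ->|Hu].
  by case: (foldr _ _ _) => [x|] //=; rewrite geq_minl.
move: (IH Hu); case: (foldr _ _ _) => [x|] //= Hx.
by rewrite geq_min Hx orbT.
Qed.

Lemma foldr_omin_attained (h : nat -> nat) (s : seq nat) :
  let m := foldr (fun v acc => omin (Some (h v)) acc) None s in
  m = None \/ exists2 w, w \in s & m = Some (h w).
Proof.
elim: s => [|a s [IH|[w Hw IH]]] /=; first by left.
  by right; exists a; rewrite ?inE ?eqxx // IH.
rewrite IH /=; right; rewrite /minn; case: ltnP => _.
  by exists a; rewrite ?inE ?eqxx.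
by exists w; rewrite // inE Hw orbT.
Qed.

Lemma minvdeg_le (F : clauseset) u : u \in var F -> ole (minvdeg F) (Some (vdeg F u)).
Proof. exact: foldr_omin_le. Qed.

Lemma ole_minvdeg (F G : clauseset) :
  (forall w, w \in var G -> exists2 u, u \in var F & vdeg F u <= vdeg G w) ->
  ole (minvdeg F) (minvdeg G).
Proof.
move=> H; have /= := foldr_omin_attained (vdeg G) (enum_fset (var G)).
rewrite -/(minvdeg G) => -[->|[w Hw ->]].
  by case: (minvdeg F).
by have [u Hu le] := H w Hw; apply: ole_trans (minvdeg_le Hu) _.
Qed.

Lemma ld_mem (F : clauseset) x (C : clause) :
  (C \in [fset C in F | x \in C]) = (C \in F) && (x \in C).
Proof. by rewrite !inE. Qed.

Lemma leq_card_ld (A : {fset clause}) (G : clauseset) x (g : clause -> clause) :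
  {in A &, injective g} -> (forall C, C \in A -> (g C \in G) && (x \in g C)) ->
  #|` A| <= ld G x.
Proof.
move=> inj_g gA; rewrite -(eqP (introT (card_in_imfsetP _ _) inj_g)).
apply: fsubset_leq_card.
by apply/fsubsetP => D /imfsetP [C /= HC ->]; rewrite ld_mem gA.
Qed.

Lemma ld_gt0 (G : clauseset) x (C : clause) : C \in G -> x \in C -> 0 < ld G x.
Proof.
by move=> HC Hx; rewrite cardfs_gt0; apply/fset0Pn; exists C; rewrite ld_mem HC.
Qed.

Lemma ld_eq1 (F : clauseset) x : ld F x = 1 -> exists C0,
  [/\ C0 \in F, x \in C0 & forall C, C \in F -> x \in C -> C = C0].
Proof.
move=> /eqP /cardfs1P [C0 E]; exists C0.
have : C0 \in [fset C in F | x \in C] by rewrite E inE.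
rewrite ld_mem => /andP [H1 H2]; split => // C HC Hx.
have : C \in [fset C in F | x \in C] by rewrite ld_mem HC.
by rewrite E inE => /eqP.
Qed.

Lemma vdeg_lit (F : clauseset) x : vdeg F x.1 = (ld F x + ld F (compl x))%N.
Proof. by case: x => n [] //=; rewrite /vdeg addnC. Qed.

Lemma MU_clause (F : clauseset) (C : clause) : min_unsat F -> C \in F -> is_clause C.
Proof. by case=> /forallP H _ HC; exact: (H [` HC]). Qed.

Lemma MU_unsat (F : clauseset) : min_unsat F -> ~ satisfiable F.
Proof. by case=> _ []. Qed.

Lemma MU_sat_del (F : clauseset) (C : clause) :
  min_unsat F -> C \in F -> exists f, cs_sat f (F `\ C).
Proof. by case=> _ [_ H] HC; apply: H. Qed.

Lemma cs_sat_del f (F : clauseset) (C E : clause) :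
  cs_sat f (F `\ C) -> E \in F -> E != C -> cl_sat f E.
Proof. by move/cs_satP=> Hf HE NE; apply: Hf; rewrite in_fsetD1 NE. Qed.

Lemma MU_sat_del_falsified (F : clauseset) (C : clause) f :
  min_unsat F -> cs_sat f (F `\ C) -> ~~ cl_sat f C.
Proof.
move=> HF Hf; apply/negP => fC; apply: (MU_unsat HF); exists f.
apply/cs_satP => E HE; have [->//|NE] := eqVneq E C; exact: cs_sat_del Hf HE NE.
Qed.

Lemma MU_compl_occurs (F : clauseset) (C : clause) x :
  min_unsat F -> C \in F -> x \in C ->
  exists2 E, E \in F & compl x \in E.
Proof.
move=> HF HC Hx; have [g Hg] := MU_sat_del HF HC.
have [/existsP [[E HE] /= cE]|pure] := boolP [exists E : F, compl x \in val E].
  by exists E.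
exfalso; apply: (MU_unsat HF); exists (set_var g x.1 x.2).
apply/cs_satP => E HE; have [xE|xE] := boolP (x \in E).
  by apply/cl_satP; exists x; rewrite // lit_sat_set_var eqxx.
rewrite cl_sat_set_var; last first.
  apply/var_clP => [[y Hy /lit_same_var [] Ey]]; subst y; first by rewrite Hy in xE.
  by move/existsP: pure; apply; exists [` HE].
by apply: (cs_sat_del Hg HE); apply: contraNneq xE => ->.
Qed.

Section SingularDP.

Variables (F : clauseset) (p : lit) (C0 : clause).
Hypotheses (HF : min_unsat F) (HC0 : C0 \in F) (pC0 : p \in C0)
  (C0_unique : forall C, C \in F -> p \in C -> C = C0).

Local Notation v := p.1.
Local Notation q := (compl p).
Local Notation res D := (resolve p.1 C0 D).

Lemma ld_p : ld F p = 1.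
Proof.
apply/eqP/cardfs1P; exists C0; apply/fsetP => C; rewrite ld_mem inE.
apply/andP/eqP => [[HC pC]|->]; [exact: C0_unique | by []].
Qed.

Lemma q_notin_C0 : q \notin C0.
Proof. exact: is_clause_compl (MU_clause HF HC0) pC0. Qed.

Lemma C0_neq D : q \in D -> C0 != D.
Proof. by move=> qD; apply: contraNneq q_notin_C0 => ->. Qed.

Lemma var_cl_v (C : clause) : (v \in var_cl C) = (p \in C) || (q \in C).
Proof.
apply/var_clP/orP => [[y Hy /lit_same_var [] Ey]|[pC|qC]]; subst.
- by left.
- by right.
- by exists p.
- by exists q.
Qed.

Lemma C0_falsified_off_v f D : D \in F -> q \in D -> cs_sat f (F `\ D) ->
  forall x, x \in C0 -> x.1 != v -> ~~ lit_sat f x.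
Proof.
move=> HD qD Hf x Hx xv; apply/negP => Sx.
apply: (MU_unsat HF); exists (set_var f v q.2).
apply/cs_satP => C HC; have [qC|qN] := boolP (q \in C).
  by apply/cl_satP; exists q; rewrite // (lit_sat_set_var f q).
have [pC|pN] := boolP (p \in C).
  rewrite (C0_unique HC pC); apply/cl_satP.
  by exists x; rewrite // lit_sat_set_var_other.
rewrite cl_sat_set_var ?var_cl_v ?negb_or ?pN ?qN //.
by apply: (cs_sat_del Hf HC); apply: contraNneq qN => ->.
Qed.

Lemma resolvent_falsified f D : D \in F -> q \in D -> cs_sat f (F `\ D) ->
  ~~ cl_sat f (res D).
Proof.
move=> HD qD Hf; have /cl_satPn fD := MU_sat_del_falsified HF Hf.
apply/cl_satPn => x; rewrite in_resolve => /andP [xv /orP [xC0|xD]].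
  exact: (C0_falsified_off_v HD qD Hf).
exact: fD.
Qed.

Lemma resolvent_clause D : D \in F -> q \in D -> is_clause (res D).
Proof.
move=> HD qD; have [f Hf] := MU_sat_del HF HD.
by apply: (@is_clause_falsified f); apply/cl_satPn; apply: resolvent_falsified.
Qed.

Lemma resolvent_sat g D : D \in F -> q \in D ->
  cl_sat g C0 -> cl_sat g D -> cl_sat g (res D).
Proof.
move=> HD qD; apply: resolve_sound; first exact: q_notin_C0.
by rewrite -[p]complK; apply: is_clause_compl qD; apply: MU_clause HD.
Qed.

Lemma resolvent_inj D1 D2 : D1 \in F -> q \in D1 -> D2 \in F -> q \in D2 ->
  res D1 = res D2 -> D1 = D2.
Proof.
move=> H1 q1 H2 q2 E; apply/eqP; apply: contraTT isT => N.
have [f Hf] := MU_sat_del HF H1.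
have := resolvent_falsified H1 q1 Hf; rewrite E resolvent_sat //.
  exact: cs_sat_del Hf HC0 (C0_neq q1).
by apply: cs_sat_del Hf H2 _; rewrite eq_sym.
Qed.

Lemma resolvent_neq_kept D E : D \in F -> q \in D -> E \in F -> v \notin var_cl E ->
  res D != E.
Proof.
move=> HD qD HE Hv; have [f Hf] := MU_sat_del HF HD.
have ED : E != D by apply: contraNneq Hv => ->; rewrite var_cl_v qD orbT.
apply: contraTneq (cs_sat_del Hf HE ED) => <-; exact: resolvent_falsified.
Qed.

Lemma DP_cases E : E \in DP v F ->
  (E \in F /\ v \notin var_cl E) \/ exists D, [/\ D \in F, q \in D & E = res D].
Proof.
case/DP_mem_cases => [|[C1 [C2 [H1 H2 P1 N2 ->]]]]; first by left.
right; case: (lit_cases p) => [[Ep Eq]|[Ep Eq]].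
- rewrite -Ep in P1; rewrite -Eq in N2.
  by exists C2; rewrite (C0_unique H1 P1).
- rewrite -Eq in P1; rewrite -Ep in N2.
  by exists C1; rewrite (C0_unique H2 N2) resolveC.
Qed.

Lemma DP_resolvent D : D \in F -> q \in D -> res D \in DP v F.
Proof.
move=> HD qD; have clR := resolvent_clause HD qD.
case: (lit_cases p) => [[Ep Eq]|[Ep Eq]].
- apply: DP_resolve; rewrite -?Ep -?Eq //; exact: MU_clause HF HC0.
- rewrite resolveC in clR *.
  apply: DP_resolve; rewrite -?Ep -?Eq //; exact: MU_clause HF HD.
Qed.

Lemma DP_unsat : ~ satisfiable (DP v F).
Proof.
move=> [h /cs_satP Hh]; apply: (MU_unsat HF).
have kept b C : C \in F -> v \notin var_cl C -> cl_sat (set_var h v b) C.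
  by move=> HC Hv; rewrite cl_sat_set_var // Hh // DP_kept.
(* [res fset0] is C0 with its literal on v removed. *)
have [/cl_satP [y Hy Sy]|C0_false] := boolP (cl_sat h (res fset0)).
- exists (set_var h v q.2); apply/cs_satP => C HC.
  have [qC|qN] := boolP (q \in C).
    by apply/cl_satP; exists q; rewrite // (lit_sat_set_var h q).
  have [pC|pN] := boolP (p \in C); last by rewrite kept // var_cl_v negb_or pN qN.
  move: Hy; rewrite in_resolve inE orbF => /andP [yv Hy].
  rewrite (C0_unique HC pC); apply/cl_satP.
  by exists y; rewrite // lit_sat_set_var_other.
- exists (set_var h v p.2); apply/cs_satP => C HC.
  have [pC|pN] := boolP (p \in C).
    by apply/cl_satP; exists p; rewrite // lit_sat_set_var.
  have [qC|qN] := boolP (q \in C); last by rewrite kept // var_cl_v negb_or pN qN.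
  have /cl_satP [y Hy Sy] := Hh _ (DP_resolvent HC qC).
  move: Hy; rewrite in_resolve => /andP [yv /orP [yC0|yC]].
    by case/negP: C0_false; apply/cl_satP; exists y; rewrite // in_resolve yv yC0.
  by apply/cl_satP; exists y; rewrite // lit_sat_set_var_other.
Qed.

Lemma DP_minimal E : E \in DP v F -> satisfiable (DP v F `\ E).
Proof.
case/DP_cases => [[HE Hv]|[D [HD qD ->]]].
- have [g Hg] := MU_sat_del HF HE; exists g; apply/cs_satP => E'.
  rewrite in_fsetD1 andbC => /andP [/DP_cases [[HE' _]|[D [HD qD ->]]] NE].
    exact: cs_sat_del Hg HE' NE.
  have vE (C : clause) : p \in C \/ q \in C -> C != E.
    by move=> vC; apply: contraNneq Hv => <-; rewrite var_cl_v; apply/orP.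
  by apply: resolvent_sat => //; apply: (cs_sat_del Hg) => //; apply: vE; auto.
- have [f Hf] := MU_sat_del HF HD; exists f; apply/cs_satP => E'.
  rewrite in_fsetD1 andbC => /andP [/DP_cases [[HE' Hv']|[D' [HD' qD' ->]]] NE].
    apply: (cs_sat_del Hf HE'); apply: contraNneq Hv' => ->.
    by rewrite var_cl_v qD orbT.
  apply: resolvent_sat => //; apply: (cs_sat_del Hf) => //; first exact: C0_neq.
  by apply: contraNneq NE => ->.
Qed.

Lemma DP_clauseset : is_clauseset (DP v F).
Proof.
apply/forallP => -[E /= /DP_cases [[HE _]|[D [HD qD ->]]]].
  exact: MU_clause HF HE.
exact: resolvent_clause.
Qed.

Lemma DP_min_unsat : min_unsat (DP v F).
Proof.
by split; [exact: DP_clauseset | split; [exact: DP_unsat | exact: DP_minimal]].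
Qed.

Lemma var_DP w : w \in var (DP v F) -> (w \in var F) && (w != v).
Proof.
case/varP => E /DP_cases [[HE Hv]|[D [HD qD ->]]] /var_clP [y Hy <-].
  apply/andP; split; first by apply/varP; exists E => //; apply/var_clP; exists y.
  by apply: contraNneq Hv => <-; apply/var_clP; exists y.
move: Hy; rewrite in_resolve => /andP [-> /orP [Hy|Hy]]; rewrite andbT.
  by apply/varP; exists C0 => //; apply/var_clP; exists y.
by apply/varP; exists D => //; apply/var_clP; exists y.
Qed.

Lemma ld_q_le x : x \in C0 -> x.1 != v -> ld F q <= ld (DP v F) x.
Proof.
move=> xC0 xv; apply: (@leq_card_ld _ _ _ (fun D => res D)).
  by move=> D1 D2; rewrite !ld_mem => /andP [H1 q1] /andP [H2 q2]; exact: resolvent_inj.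
by move=> D; rewrite ld_mem => /andP [HD qD]; rewrite DP_resolvent // in_resolve xv xC0.
Qed.

Lemma ld_compl_gt0 x : x \in C0 -> x.1 != v -> 0 < ld (DP v F) (compl x).
Proof.
move=> xC0 xv; have [E HE cE] := MU_compl_occurs HF HC0 xC0.
apply: (@ld_gt0 _ _ E) => //; apply: DP_kept => //; rewrite var_cl_v negb_or.
apply/andP; split; apply/negP.
  move=> pE; move: cE; rewrite (C0_unique HE pE).
  by apply/negP; apply: is_clause_compl (MU_clause HF HC0) xC0.
move=> qE; have xR : x \in res E by rewrite in_resolve xv xC0.
by move: (is_clause_compl (resolvent_clause HE qE) xR); rewrite in_resolve xv cE orbT.
Qed.

Lemma vdeg_v_le x : x \in C0 -> x.1 != v -> vdeg F v <= vdeg (DP v F) x.1.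
Proof.
move=> xC0 xv; rewrite !vdeg_lit ld_p addnC.
by apply: leq_add; [exact: ld_q_le | exact: ld_compl_gt0].
Qed.

Lemma ld_le_DP y : y \notin C0 -> y.1 != v -> ld F y <= ld (DP v F) y.
Proof.
move=> yC0 yv.
have pN E : E \in F -> y \in E -> p \notin E.
  by move=> HE yE; apply: contraNN yC0 => pE; rewrite -(C0_unique HE pE).
have kept E : E \in F -> y \in E -> q \notin E -> v \notin var_cl E.
  by move=> HE yE qN; rewrite var_cl_v negb_or pN.
apply: (@leq_card_ld _ _ _ (fun E => if q \in E then res E else E)).
  move=> E1 E2; rewrite !ld_mem => /andP [H1 y1] /andP [H2 y2].
  have [q1|q1] := boolP (q \in E1); have [q2|q2] := boolP (q \in E2).
  - exact: resolvent_inj.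
  - by move=> /eqP; rewrite (negbTE (resolvent_neq_kept H1 q1 H2 (kept _ H2 y2 q2))).
  - move=> /esym /eqP.
    by rewrite (negbTE (resolvent_neq_kept H2 q2 H1 (kept _ H1 y1 q1))).
  - by [].
move=> E; rewrite ld_mem => /andP [HE yE]; have [qE|qE] := ifP.
  by rewrite DP_resolvent // in_resolve yv yE orbT.
by rewrite DP_kept // kept ?qE.
Qed.

Lemma vdeg_le_DP w : w \notin var_cl C0 -> w != v -> vdeg F w <= vdeg (DP v F) w.
Proof.
move=> wC0 wv; have notC0 b : (w, b) \notin C0.
  by apply: contraNN wC0 => wb; apply/var_clP; exists (w, b).
by rewrite /vdeg; apply: leq_add; apply: ld_le_DP => //; apply: notC0.
Qed.

Lemma DP_vdeg_ge w : w \in var (DP v F) ->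
  exists2 u, u \in var F & vdeg F u <= vdeg (DP v F) w.
Proof.
case/var_DP/andP => wF wv; have [/var_clP [x xC0 Ex]|wC0] := boolP (w \in var_cl C0).
  exists v; last by rewrite -Ex; apply: vdeg_v_le; rewrite // Ex.
  by apply/varP; exists C0 => //; apply/var_clP; exists p.
by exists w => //; apply: vdeg_le_DP.
Qed.

End SingularDP.

Lemma sDP_step_min_unsat F G : min_unsat F -> sDP_step F G ->
  min_unsat G /\ ole (minvdeg F) (minvdeg G).
Proof.
move=> HF [v [/andP [_ /eqP Hmin] ->]].
have [p [<- ld_p]] : exists p : lit, p.1 = v /\ ld F p = 1.
  by move: Hmin; rewrite /minn; case: ltnP => _ H; [exists (pos v)|exists (neg v)].
have [C0 [HC0 pC0 C0_unique]] := ld_eq1 ld_p.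
split; first exact: (DP_min_unsat HF HC0 pC0 C0_unique).
by apply: ole_minvdeg => w; apply: (DP_vdeg_ge HF HC0 pC0 C0_unique).
Qed.

Theorem lemma5p4 (F F' : clauseset) :
  min_unsat F -> min_unsat F' -> sDP_star F F' ->
  ole (minvdeg F) (minvdeg F').
Proof.
move=> HF _ /clos_rt_rt1n_iff steps; elim: steps HF => [G _|G H K GH _ IH HG].
  exact: ole_refl.
have [HH le] := sDP_step_min_unsat HG GH.
exact: ole_trans le (IH HH).
Qed.
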